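(* Let $K$ be a finite field of characteristic $p$ and order $q$, let $s$ be a positive integer with $\gcd(s,q-1)=1$, and let $\tau$ be the permutation of $\mathcal{W}_{K,s}$ defined below. If $p=2$, the cycle type of $\tau$ consists of $|\mathcal{W}_{K,s}|$ instances of $1$. If $p$ is odd, the cycle type of $\tau$ contains no number larger than $(p-1)/2$.
   Context: $\zeta=\exp(2\pi i/p)$, $\psi(x)=\zeta^{\mathrm{Tr}(x)}$ with $\mathrm{Tr}$ the absolute trace of $K$ to $\mathbb{F}_p$; $W_u=\sum_{x\in K}\psi(x^s-ux)$; $\mathcal{W}_{K,s}=\{W_u:u\in K^\times\}$. Let $\gamma$ be a primitive element of $\mathbb{F}_p$ and $\sigma\in\mathrm{Gal}(\mathbb{Q}(\zeta)/\mathbb{Q})$ with $\sigma(\zeta)=\zeta^\gamma$; it is known that $\sigma(W_u)=W_{\gamma^{1-1/s}u}$ (with $1/s$ the inverse of $s$ mod $p-1$), so $\sigma$ restricts to a permutation $\tau$ of $\mathcal{W}_{K,s}$. The cycle type of a permutation is the multiset of lengths of the cycles in its decomposition into disjoint cycles. *)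

From HB Require Import structures.
From mathcomp Require Import all_boot all_order all_algebra all_field.
Set Implicit Arguments. Unset Strict Implicit. Unset Printing Implicit Defensive.
Import GRing.Theory Num.Theory.
Local Open Scope ring_scope.

(* zeta = exp(2 pi i / p): (p.-root (-1)) is the p-th root of -1 of minimal
   nonnegative argument, i.e. exp(i pi / p); its square is exp(2 pi i / p). *)
Definition zeta (p : nat) : algC := (p.-root (-1)) ^+ 2.

(* absolute trace K -> F_p (valued in the prime subfield of K), q = p ^ n *)
Definition absTr (K : finFieldType) (p : nat) (x : K) : K :=
  \sum_(i < logn p #|K|) x ^+ (p ^ i).

Definition trn (K : finFieldType) (p : nat) (x : K) : nat :=
  odflt ord0 [pick k : 'I_p.+1 | (k < p)%N && ((k%:R : K) == absTr p x)].

Definition psi (K : finFieldType) (p : nat) (x : K) : algC :=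
  zeta p ^+ trn p x.

Definition Wu (K : finFieldType) (p s : nat) (u : K) : algC :=
  \sum_(x : K) psi p (x ^+ s - u * x).

Definition Wlist (K : finFieldType) (p s : nat) : seq algC :=
  undup [seq Wu p s u | u <- enum K & u != 0].

Definition Wtype (K : finFieldType) (p s : nat) : finType :=
  seq_sub (Wlist K p s).

(* tau : restriction of sigma to W_{K,s} (identity fallback off W, never used
   since sigma maps W_{K,s} into itself) *)
Definition tau (K : finFieldType) (p s : nat) (sigma : {rmorphism algC -> algC})
  (w : Wtype K p s) : Wtype K p s := insubd w (sigma (val w)).

(* cycle type of f : T -> T (T finite): the lengths of its cycles, one entry
   per cycle (cycles represented by their roots) *)
Definition cycle_type (T : finType) (f : T -> T) : seq nat :=
  [seq order f x | x <- enum (froots f)].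

From HB Require Import structures.
From mathcomp Require Import all_boot all_order all_algebra all_field.
From mathcomp Require Import ring.
Set Implicit Arguments.
Unset Strict Implicit.
Unset Printing Implicit Defensive.

Import GRing.Theory Num.Theory.
Local Open Scope ring_scope.

(* The absolute trace takes values in the prime field, so [psi (n x) = psi x ^ n]
   and [sigma (psi x) = psi (gamma x)].  Substituting [x := c x] in [W_u], with
   [gamma c ^ s = 1], gives [sigma W_u = W_(d u)] for [d = gamma ^ (1 + a)], where
   [a s = -1] mod [q - 1].  Hence [tau ^ m = id] whenever [d ^ m = 1].  For [p = 2]
   already [gamma = 1 = d]; for odd [p], [q - 1] is even, so [a] is odd and [d] is a
   power of [gamma ^ 2], whose order divides [(p - 1) / 2]. *)

Lemma expf_card_pred (F : finFieldType) (x : F) : x != 0 -> x ^+ #|F|.-1 = 1.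
Proof.
move=> x_neq0; apply: (mulIf x_neq0).
by rewrite mul1r -exprSr prednK ?expf_card // (ltnW (finNzRing_gt1 F)).
Qed.

Section PrimeSubfield.

Variables (K : finFieldType) (p : nat).
Hypothesis pchK : p \in [pchar K].

Let p_prime : prime p := pcharf_prime pchK.

Lemma natr_inj_pchar i j : (i < p)%N -> (j < p)%N -> (i%:R : K) = j%:R -> i = j.
Proof.
wlog le_ij : i j / (i <= j)%N.
  by move=> W ip jp; case: (leqP i j) => [|/ltnW] ? e; [|symmetry]; apply: W.
move=> _ jp e; have : (p %| j - i)%N by rewrite (dvdn_pcharf pchK) natrB // e subrr.
have [/eqP|ji_gt0] := posnP (j - i).
  by rewrite subn_eq0 => le_ji _; apply/eqP; rewrite eqn_leq le_ij.
by rewrite gtnNdvd // (leq_ltn_trans (leq_subr i j)).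
Qed.

Lemma natrXp_pchar n : (n%:R : K) ^+ p = n%:R.
Proof. by rewrite -(pFrobenius_autE pchK) rmorph_nat. Qed.

Lemma natrX_pred_pchar n : (n%:R : K) != 0 -> (n%:R : K) ^+ p.-1 = 1.
Proof.
move=> n_neq0; apply: (mulIf n_neq0).
by rewrite mul1r -exprSr prednK ?prime_gt0 ?natrXp_pchar.
Qed.

(* The [p] distinct elements [k%:R] are roots of ['X^p - 'X], which has no others. *)
Lemma pFrobenius_fixed_natr (x : K) : x ^+ p = x -> exists2 k, (k < p)%N & x = k%:R.
Proof.
move=> xp; set P : {poly K} := 'X^p - 'X; pose rs : seq K := [seq k%:R | k <- iota 0 p].
have sizeP : size P = p.+1.
  by rewrite size_polyDl ?size_polyXn // size_polyN size_polyX ltnS prime_gt1.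
have rootP (y : K) : y ^+ p = y -> root P y.
  by move=> yp; rewrite /root !hornerE yp subrr.
have rs_uniq : uniq rs.
  rewrite map_inj_in_uniq ?iota_uniq // => i j.
  by rewrite !mem_iota !add0n; apply: natr_inj_pchar.
case rs_x : (x \in rs).
  by case/mapP: rs_x => k; rewrite mem_iota add0n => /andP[_ kp] ->; exists k.
have P_neq0 : P != 0 by rewrite -size_poly_eq0 sizeP.
have all_roots : all (root P) (x :: rs).
  by rewrite /= rootP //; apply/allP => _ /mapP[k _ ->]; apply/rootP/natrXp_pchar.
have := max_poly_roots P_neq0 all_roots.
by rewrite /= rs_x rs_uniq sizeP size_map size_iota ltnn => /(_ isT).
Qed.

Lemma absTr_natM n (x : K) : absTr p (n%:R * x) = n%:R * absTr p x.
Proof.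
rewrite /absTr mulr_sumr; apply: eq_bigr => i _; rewrite exprMn; congr (_ * _).
elim: (nat_of_ord i) => [|j IHj]; first by rewrite expr1.
by rewrite expnSr exprM IHj natrXp_pchar.
Qed.

(* Frobenius shifts the terms of the trace cyclically, since [x ^+ #|K| = x]. *)
Lemma absTrXp (x : K) : absTr p x ^+ p = absTr p x.
Proof.
rewrite /absTr -(pFrobenius_autE pchK) rmorph_sum /=.
set n := logn p #|K|; pose f i := x ^+ (p ^ i).
have fn : f n = f 0%N by rewrite /f /n -(card_pprimeChar pchK) expf_card expr1.
have := @big_ord_recl K 0 +%R n (fun i => f i).
rewrite big_ord_recr /= fn addrC => /addrI ->.
by apply: eq_bigr => i _; rewrite pFrobenius_autE /f -exprM -expnSr.
Qed.

Lemma trn_spec (x : K) : (trn p x < p)%N /\ (trn p x)%:R = absTr p x.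
Proof.
have [k kp trk] := pFrobenius_fixed_natr (absTrXp x).
rewrite /trn; case: pickP => [j /andP[jp /eqP ->] // | none].
have := none (inord k); rewrite inordK ?kp ?trk ?eqxx //.
by rewrite ltnS ltnW.
Qed.

Lemma trn_natM n (x : K) : trn p (n%:R * x) = (n * trn p x %% p)%N.
Proof.
have [lt_nx tr_nx] := trn_spec (n%:R * x); have [_ tr_x] := trn_spec x.
apply: natr_inj_pchar; rewrite ?ltn_mod ?prime_gt0 //.
by rewrite GRing.natr_mod_pchar // natrM tr_x tr_nx absTr_natM.
Qed.

End PrimeSubfield.

Lemma zeta_expr_p (p : nat) : (0 < p)%N -> zeta p ^+ p = 1.
Proof. by move=> p_gt0; rewrite /zeta exprAC rootCK // sqrrN expr1n. Qed.

Section GaloisAction.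

Variables (K : finFieldType) (p s gamma : nat) (sigma : {rmorphism algC -> algC}).
Hypothesis pchK : p \in [pchar K].
Hypothesis sigma_zeta : sigma (zeta p) = zeta p ^+ gamma.

Lemma psi_natM n (x : K) : psi p (n%:R * x) = psi p x ^+ n.
Proof.
have p_gt0 := prime_gt0 (pcharf_prime pchK).
by rewrite /psi trn_natM // (expr_mod _ (zeta_expr_p p_gt0)) mulnC exprM.
Qed.

Lemma sigma_psi (x : K) : sigma (psi p x) = psi p (gamma%:R * x).
Proof. by rewrite psi_natM /psi rmorphXn sigma_zeta exprAC. Qed.

Lemma sigma_Wu (c u : K) : c != 0 -> gamma%:R * c ^+ s = 1 ->
  sigma (Wu p s u) = Wu p s (gamma%:R * c * u).
Proof.
move=> c_neq0 gcs; rewrite /Wu rmorph_sum (reindex_inj (mulfI c_neq0)) /=.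
apply: eq_bigr => x _; rewrite sigma_psi; congr psi.
by rewrite mulrBr exprMn mulrA gcs mul1r; congr (_ - _); ring.
Qed.

(* [gamma%:R ^+ a.+1] is the paper's [gamma ^ (1 - 1/s)], [a] standing for [-1/s] mod [#|K| - 1]. *)
Lemma sigma_Wu_expr (a : nat) (u : K) : gamma%:R != 0 :> K ->
  (#|K|.-1 %| 1 + a * s)%N -> sigma (Wu p s u) = Wu p s (gamma%:R ^+ a.+1 * u).
Proof.
move=> g_neq0 dvd_q; rewrite (@sigma_Wu (gamma%:R ^+ a)) ?expf_neq0 -?exprS //.
rewrite -exprM -exprS -add1n; have [k ->] := dvdnP dvd_q.
by rewrite exprM expf_card_pred ?expf_neq0 ?expr1n.
Qed.

End GaloisAction.

Lemma Wtype_Wu (K : finFieldType) (p s : nat) (w : Wtype K p s) :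
  exists2 u : K, u != 0 & val w = Wu p s u.
Proof.
have := valP w; rewrite mem_undup => /mapP[u].
by rewrite mem_filter => /andP[u_neq0 _] ->; exists u.
Qed.

Section TauMultiplication.

Variables (K : finFieldType) (p s : nat) (sigma : {rmorphism algC -> algC}) (d : K).
Hypothesis d_neq0 : d != 0.
Hypothesis sigma_Wu_mul : forall u, sigma (Wu p s u) = Wu p s (d * u).

Lemma tau_Wu (w : Wtype K p s) (u : K) : u != 0 -> val w = Wu p s u ->
  val (tau sigma w) = Wu p s (d * u).
Proof.
move=> u_neq0 wu; rewrite /tau insubdK wu sigma_Wu_mul // mem_undup.
by apply/mapP; exists (d * u); rewrite // mem_filter mulf_neq0 ?mem_enum.
Qed.

Lemma iter_tau_id m : d ^+ m = 1 -> iter m (@tau K p s sigma) =1 id.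
Proof.
move=> dm w; have [u u_neq0 wu] := Wtype_Wu w; apply: val_inj.
suff -> : val (iter m (tau sigma) w) = Wu p s (d ^+ m * u) by rewrite dm mul1r.
elim: m {dm} => [|m IH]; first by rewrite mul1r.
by rewrite iterS (tau_Wu _ IH) ?exprS ?mulrA // mulf_neq0 ?expf_neq0.
Qed.

End TauMultiplication.

Lemma order_le_iter (T : finType) (f : T -> T) (x : T) (m : nat) :
  (0 < m)%N -> iter m f x = x -> (order f x <= m)%N.
Proof.
move=> m_gt0 fmx; rewrite -size_orbit -(size_traject f x m).
apply: (leq_trans _ (card_size _)); rewrite -(card_uniqP (orbit_uniq f x)).
apply/subset_leq_card/subsetP => y; rewrite -fconnect_orbit => /iter_findex <-.
by apply/loopingP; rewrite /looping fmx; case: m m_gt0 {fmx} => // m _; rewrite mem_head.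
Qed.

Lemma cycle_type_le (T : finType) (f : T -> T) (m : nat) :
  (0 < m)%N -> iter m f =1 id -> all (fun k => k <= m)%N (cycle_type f).
Proof. by move=> m_gt0 fm; rewrite all_map; apply/allP => x _ /=; apply: order_le_iter. Qed.

Lemma cycle_type_id (T : finType) (f : T -> T) : f =1 id -> cycle_type f = nseq #|T| 1%N.
Proof.
move=> f_id; have roots_f : froots f =i T by move=> x; rewrite inE (eq_froots f_id) froots_id.
rewrite /cycle_type (eq_enum roots_f) cardE -(size_map (order f)); apply/all_pred1P.
rewrite all_map; apply/allP => x _ /=.
by rewrite /order (eq_card (eq_fconnect f_id x)) -/(order id x) order_id.
Qed.

Lemma exprS_half_even (R : pzSemiRingType) (x : R) (a m : nat) :
  odd a -> ~~ odd m -> x ^+ m = 1 -> (x ^+ a.+1) ^+ m./2 = 1.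
Proof.
move=> odd_a even_m xm; have e : (a.+1 * m./2 = a.+1./2 * m)%N.
  by rewrite -{1}[a.+1]even_halfK /= ?odd_a // -doubleMl doubleMr even_halfK.
by rewrite -exprM e mulnC exprM xm expr1n.
Qed.

Lemma odd_dvdn_add1M (m a b : nat) : ~~ odd m -> (m %| 1 + a * b)%N -> odd a.
Proof.
move=> even_m dvd_m; have : (2 %| 1 + a * b)%N by apply: dvdn_trans dvd_m; rewrite dvdn2.
by rewrite dvdn2 oddD oddM negbK => /andP[].
Qed.

Lemma natr_neq0_prim_root (K : finFieldType) (p n gamma : nat) :
  p \in [pchar K] -> (0 < n)%N -> n.-primitive_root (gamma%:R : 'F_p) ->
  (gamma%:R : K) != 0.
Proof.
move=> pchK n_gt0 prim; have := prim_expr_order prim.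
rewrite -(dvdn_pcharf pchK) (dvdn_pcharf (pchar_Fp (pcharf_prime pchK))).
by move=> gn; apply/eqP => g0; move: gn; rewrite g0 expr0n gtn_eqF.
Qed.

Theorem lemma2p4 (K : finFieldType) (p s gamma : nat)
  (sigma : {rmorphism algC -> algC}) :
  p \in [pchar K] ->
  (0 < s)%N ->
  coprime s #|K|.-1 ->
  p.-1.-primitive_root (gamma%:R : 'F_p) ->
  sigma (zeta p) = zeta p ^+ gamma ->
  (p = 2%N -> perm_eq (cycle_type (@tau K p s sigma))
                      (nseq #|@Wtype K p s| 1%N)) /\
  (odd p -> all (fun k => (k <= p.-1./2)%N) (cycle_type (@tau K p s sigma))).
Proof.
move=> pchK _ cop_s prim sigma_zeta.
have p_gt1 := prime_gt1 (pcharf_prime pchK).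
have q_gt1 := finNzRing_gt1 K.
set g : K := gamma%:R; set q := #|K|.
have g_neq0 : g != 0 by apply: natr_neq0_prim_root pchK _ prim; rewrite ltn_predRL.
have gp : g ^+ p.-1 = 1 := natrX_pred_pchar pchK g_neq0.
have q1_gt0 : (0 < q.-1)%N by rewrite ltn_predRL.
have [a _ dvd_q] := Bezoutl s q1_gt0.
rewrite gcdnC (eqP cop_s) in dvd_q.
have d_neq0 : g ^+ a.+1 != 0 by rewrite expf_neq0.
have sigma_Wu_mul (u : K) := sigma_Wu_expr pchK sigma_zeta u g_neq0 dvd_q.
split => [p2 | odd_p].
  rewrite cycle_type_id; first exact: perm_refl.
  apply: (iter_tau_id d_neq0 sigma_Wu_mul (m := 1)).
  by move: gp; rewrite p2 !expr1 => ->; rewrite expr1n.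
have even_q1 : ~~ odd q.-1.
  by rewrite -oddS prednK ?(ltnW q_gt1) // /q (card_pprimeChar pchK) oddX odd_p orbT.
have p_gt2 : (2 < p)%N by rewrite ltn_neqAle p_gt1 andbT; apply: contraTneq odd_p => <-.
apply: cycle_type_le; first by rewrite half_gt0 ltn_predRL.
apply: (iter_tau_id d_neq0 sigma_Wu_mul).
apply: exprS_half_even gp; first exact: odd_dvdn_add1M even_q1 dvd_q.
by rewrite -oddS prednK ?(ltnW p_gt1).
Qed.
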